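(* Let $\mathbf{D}$ be a 2-category with an enhanced factorization system $(\mathcal{E},\mathcal{M})$ and $\mathbf{C}$ a small 2-category, and assume $(\mathcal{E},\mathcal{M})$ separates parallel pairs, every 1-cell in $\mathcal{E}$ is a 2-epimorphism and every 1-cell in $\mathcal{M}$ is a 2-monomorphism. Then the pair $(\mathcal{E}^{\mathbf{C}},\mathcal{M}^{\mathbf{C}})$ in $\mathbf{D}^{\mathbf{C}}$ satisfies condition (iii) of the definition of enhanced factorization system: given $\varepsilon\colon F\Rightarrow F'$ in $\mathcal{E}^{\mathbf{C}}$, $\mu\colon G\Rightarrow G'$ in $\mathcal{M}^{\mathbf{C}}$, 2-natural transformations $\alpha_1,\alpha_2\colon F\Rightarrow G$, $\alpha_1',\alpha_2'\colon F'\Rightarrow G'$ with $\alpha_i'\varepsilon=\mu\alpha_i$, and modifications $\Phi\colon\alpha_1\Rrightarrow\alpha_2$, $\Phi'\colon\alpha_1'\Rrightarrow\alpha_2'$ with $\mu\Phi=\Phi'\varepsilon$, and letting $\delta_i\colon F'\Rightarrow G$ be the unique 2-natural transformations with $\delta_i\varepsilon=\alpha_i$ and $\mu\delta_i=\alpha_i'$, there is a unique modification $\Delta\colon\delta_1\Rrightarrow\delta_2$ with $\Delta\varepsilon=\Phi$ and $\mu\Delta=\Phi'$.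
   Context: For a 2-category $\mathbf{A}$, an enhanced factorization system on $\mathbf{A}$ is a pair $(\mathcal{E},\mathcal{M})$ of classes of 1-cells of $\mathbf{A}$, each containing all isomorphisms, such that: (i) every 1-cell $\alpha$ factors (not necessarily uniquely) as $\alpha=\mu\circ\varepsilon$ with $\varepsilon\in\mathcal{E}$, $\mu\in\mathcal{M}$; (ii) given $\varepsilon\colon F\to F'$ in $\mathcal{E}$, $\mu\colon G\to G'$ in $\mathcal{M}$, 1-cells $\alpha\colon F\to G$, $\alpha'\colon F'\to G'$ and an invertible 2-cell $\Psi\colon \alpha'\varepsilon\Rightarrow\mu\alpha$, there is a unique pair $(\delta,\widetilde\Psi)$ with $\delta\colon F'\to G$ a 1-cell and $\widetilde\Psi\colon\alpha'\Rightarrow\mu\delta$ an invertible 2-cell such that $\delta\varepsilon=\alpha$ and the whiskering $\widetilde\Psi\varepsilon=\Psi$; moreover if $\Psi$ is an identity then $\mu\delta=\alpha'$ and $\widetilde\Psi$ is an identity; (iii) given $\varepsilon\colon F\to F'$ in $\mathcal{E}$, $\mu\colon G\to G'$ in $\mathcal{M}$, parallel 1-cells $\alpha_1,\alpha_2\colon F\to G$ and $\alpha_1',\alpha_2'\colon F'\to G'$ with $\alpha_i'\varepsilon=\mu\alpha_i$ ($i=1,2$), and 2-cells $\Phi\colon\alpha_1\Rightarrow\alpha_2$, $\Phi'\colon\alpha_1'\Rightarrow\alpha_2'$ with $\mu\Phi=\Phi'\varepsilon$, let $\delta_i\colon F'\to G$ be the unique 1-cells with $\delta_i\varepsilon=\alpha_i$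 and $\mu\delta_i=\alpha_i'$ (from (ii) with identity 2-cell); then there is a unique 2-cell $\Delta\colon\delta_1\Rightarrow\delta_2$ with $\Delta\varepsilon=\Phi$ and $\mu\Delta=\Phi'$. $(\mathcal{E},\mathcal{M})$ separates parallel pairs if whenever $\alpha,\beta\colon F\to G$ are parallel 1-cells for which there exist $\varepsilon\in\mathcal{E}$ with target $F$ and $\alpha\varepsilon=\beta\varepsilon$, and $\mu\in\mathcal{M}$ with source $G$ and $\mu\alpha=\mu\beta$, then $\alpha=\beta$. A 1-cell $\varepsilon\colon F\to G$ is a 2-epimorphism if for all 1-cells $\beta,\beta'\colon G\to H$ and 2-cells $\Psi,\Psi'\colon\beta\Rightarrow\beta'$, $\Psi\varepsilon=\Psi'\varepsilon$ implies $\Psi=\Psi'$. A 1-cell $\mu\colon G\to H$ is a 2-monomorphism if for all 1-cells $\beta,\beta'\colon F\to G$ and 2-cells $\Psi,\Psi'\colon\beta\Rightarrow\beta'$, $\mu\Psi=\mu\Psi'$ implies $\Psi=\Psi'$. $\mathbf{D}^{\mathbf{C}}$ is the 2-category of 2-functors $\mathbf{C}\to\mathbf{D}$, 2-natural transformations, and modifications. $\mathcal{E}^{\mathbf{C}}$ (resp. $\mathcal{M}^{\mathbf{C}}$) is the class of 2-natural transformations all of whose components lie in $\mathcal{E}$ (resp. $\mathcal{M}$). *)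

Set Implicit Arguments.
Set Universe Polymorphism.

Definition cast2 {O : Type} {H : O -> O -> Type}
  (Cl : forall A B : O, H A B -> H A B -> Type) {A B : O}
  {f f' g g' : H A B} (ef : f = f') (eg : g = g') (a : Cl A B f g) : Cl A B f' g' :=
  match ef in _ = x, eg in _ = y return Cl A B x y with
  | eq_refl, eq_refl => a end.

Record TwoCat := {
  ob : Type;
  hom : ob -> ob -> Type;
  cell : forall {A B : ob}, hom A B -> hom A B -> Type;
  id1 : forall A : ob, hom A A;
  comp1 : forall {A B C : ob}, hom B C -> hom A B -> hom A C;
  id2 : forall {A B : ob} (f : hom A B), cell f f;
  vcomp : forall {A B : ob} {f g h : hom A B}, cell g h -> cell f g -> cell f h;
  hcomp : forall {A B C : ob} {f f' : hom A B} {g g' : hom B C},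
      cell g g' -> cell f f' -> cell (comp1 g f) (comp1 g' f');
  comp1_assoc : forall {A B C D : ob} (h : hom C D) (g : hom B C) (f : hom A B),
      comp1 h (comp1 g f) = comp1 (comp1 h g) f;
  comp1_idl : forall {A B : ob} (f : hom A B), comp1 (id1 B) f = f;
  comp1_idr : forall {A B : ob} (f : hom A B), comp1 f (id1 A) = f;
  vcomp_assoc : forall {A B : ob} {f g h k : hom A B}
      (c : cell h k) (b : cell g h) (a : cell f g),
      vcomp c (vcomp b a) = vcomp (vcomp c b) a;
  vcomp_idl : forall {A B : ob} {f g : hom A B} (a : cell f g), vcomp (id2 g) a = a;
  vcomp_idr : forall {A B : ob} {f g : hom A B} (a : cell f g), vcomp a (id2 f) = a;
  hcomp_id2 : forall {A B C : ob} (f : hom A B) (g : hom B C),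
      hcomp (id2 g) (id2 f) = id2 (comp1 g f);
  interchange : forall {A B C : ob} {f f' f'' : hom A B} {g g' g'' : hom B C}
      (b' : cell g' g'') (b : cell g g') (a' : cell f' f'') (a : cell f f'),
      hcomp (vcomp b' b) (vcomp a' a) = vcomp (hcomp b' a') (hcomp b a);
  hcomp_assoc : forall {A B C D : ob} {f f' : hom A B} {g g' : hom B C} {h h' : hom C D}
      (c : cell h h') (b : cell g g') (a : cell f f'),
      cast2 (@cell) (comp1_assoc h g f) (comp1_assoc h' g' f') (hcomp c (hcomp b a))
      = hcomp (hcomp c b) a;
  hcomp_idl : forall {A B : ob} {f f' : hom A B} (a : cell f f'),
      cast2 (@cell) (comp1_idl f) (comp1_idl f') (hcomp (id2 (id1 B)) a) = a;
  hcomp_idr : forall {A B : ob} {f f' : hom A B} (a : cell f f'),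
      cast2 (@cell) (comp1_idr f) (comp1_idr f') (hcomp a (id2 (id1 A))) = a
}.

Arguments hom {t} _ _.
Arguments cell {t} {A B} _ _.
Arguments id1 {t} _.
Arguments comp1 {t} {A B C} _ _.
Arguments id2 {t} {A B} _.
Arguments vcomp {t} {A B} {f g h} _ _.
Arguments hcomp {t} {A B C} {f f' g g'} _ _.
Arguments comp1_assoc {t} {A B C D} _ _ _.

Section Basics.
Variable D : TwoCat.

Definition Cast2 {A B : ob D} {f f' g g' : hom A B} (ef : f = f') (eg : g = g')
  (a : cell f g) : cell f' g' := cast2 (@cell D) ef eg a.

Definition whiskerL {A B C : ob D} (h : hom B C) {f f' : hom A B} (a : cell f f')
  : cell (comp1 h f) (comp1 h f') := hcomp (id2 h) a.
Definition whiskerR {A B C : ob D} {g g' : hom B C} (a : cell g g') (f : hom A B)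
  : cell (comp1 g f) (comp1 g' f) := hcomp a (id2 f).

Definition is_iso1 {A B : ob D} (f : hom A B) : Prop :=
  exists g : hom B A, comp1 g f = id1 A /\ comp1 f g = id1 B.

Definition is_invertible2 {A B : ob D} {f g : hom A B} (a : cell f g) : Prop :=
  exists b : cell g f, vcomp b a = id2 f /\ vcomp a b = id2 g.

Definition cls := forall A B : ob D, hom A B -> Prop.

Definition two_epi {F G : ob D} (e : hom F G) : Prop :=
  forall (H : ob D) (b b' : hom G H) (P P' : cell b b'),
    whiskerR P e = whiskerR P' e -> P = P'.
Definition two_mono {G H : ob D} (m : hom G H) : Prop :=
  forall (F : ob D) (b b' : hom F G) (P P' : cell b b'),
    whiskerL m P = whiskerL m P' -> P = P'.

Definition efs_i (E M : cls) : Prop :=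
  forall (A B : ob D) (a : hom A B),
    exists (X : ob D) (e : hom A X) (m : hom X B), E _ _ e /\ M _ _ m /\ a = comp1 m e.

Definition efs_ii_prop {F F' G G' : ob D} (e : hom F F') (m : hom G G')
  (a : hom F G) (a' : hom F' G') (Psi : cell (comp1 a' e) (comp1 m a))
  (p : {d : hom F' G & cell a' (comp1 m d)}) : Prop :=
  exists ed : comp1 (projT1 p) e = a,
    is_invertible2 (projT2 p) /\
    whiskerR (projT2 p) e =
      Cast2 eq_refl
        (eq_trans (f_equal (comp1 m) (eq_sym ed)) (comp1_assoc m (projT1 p) e)) Psi.

Definition efs_ii (E M : cls) : Prop :=
  (forall (F F' G G' : ob D) (e : hom F F') (m : hom G G'),
    E _ _ e -> M _ _ m ->
    forall (a : hom F G) (a' : hom F' G') (Psi : cell (comp1 a' e) (comp1 m a)),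
      is_invertible2 Psi ->
      exists! p : {d : hom F' G & cell a' (comp1 m d)}, efs_ii_prop e m a a' Psi p)
  /\
  (forall (F F' G G' : ob D) (e : hom F F') (m : hom G G'),
    E _ _ e -> M _ _ m ->
    forall (a : hom F G) (a' : hom F' G') (h : comp1 a' e = comp1 m a)
      (p : {d : hom F' G & cell a' (comp1 m d)}),
      efs_ii_prop e m a a' (Cast2 eq_refl h (id2 (comp1 a' e))) p ->
      exists em : comp1 m (projT1 p) = a',
        projT2 p = Cast2 eq_refl (eq_sym em) (id2 a')).

(* (iii) 2-dimensional lifting; delta_i are the 1-cells given by (ii)
   (unique by (ii)), here quantified over all 1-cells with the two equations. *)
Definition efs_iii (E M : cls) : Prop :=
  forall (F F' G G' : ob D) (e : hom F F') (m : hom G G'),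
    E _ _ e -> M _ _ m ->
    forall (a1 a2 : hom F G) (a1' a2' : hom F' G')
      (h1 : comp1 a1' e = comp1 m a1) (h2 : comp1 a2' e = comp1 m a2)
      (Phi : cell a1 a2) (Phi' : cell a1' a2'),
      whiskerL m Phi = Cast2 h1 h2 (whiskerR Phi' e) ->
    forall (d1 d2 : hom F' G)
      (e1 : comp1 d1 e = a1) (e2 : comp1 d2 e = a2)
      (m1 : comp1 m d1 = a1') (m2 : comp1 m d2 = a2'),
    exists! Delta : cell d1 d2,
      whiskerR Delta e = Cast2 (eq_sym e1) (eq_sym e2) Phi /\
      whiskerL m Delta = Cast2 (eq_sym m1) (eq_sym m2) Phi'.

Definition enhanced_factorization_system (E M : cls) : Prop :=
  (forall (A B : ob D) (f : hom A B), is_iso1 f -> E _ _ f) /\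
  (forall (A B : ob D) (f : hom A B), is_iso1 f -> M _ _ f) /\
  efs_i E M /\ efs_ii E M /\ efs_iii E M.

Definition separates_parallel_pairs (E M : cls) : Prop :=
  forall (F G : ob D) (a b : hom F G),
    (exists (X : ob D) (e : hom X F), E _ _ e /\ comp1 a e = comp1 b e) ->
    (exists (Y : ob D) (m : hom G Y), M _ _ m /\ comp1 m a = comp1 m b) ->
    a = b.

End Basics.

Arguments two_epi {D} {F G} _.
Arguments two_mono {D} {G H} _.
Arguments is_iso1 {D} {A B} _.
Arguments is_invertible2 {D} {A B} {f g} _.
Arguments Cast2 {D} {A B} {f f' g g'} _ _ _.
Arguments whiskerL {D} {A B C} _ {f f'} _.
Arguments whiskerR {D} {A B C} {g g'} _ _.

Record TwoFunctor (C D : TwoCat) := {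
  fobj : ob C -> ob D;
  fmap1 : forall {A B : ob C}, hom A B -> hom (fobj A) (fobj B);
  fmap2 : forall {A B : ob C} {f g : hom A B}, cell f g -> cell (fmap1 f) (fmap1 g);
  fmap1_id : forall A : ob C, fmap1 (id1 A) = id1 (fobj A);
  fmap1_comp : forall {A B C' : ob C} (g : hom B C') (f : hom A B),
      fmap1 (comp1 g f) = comp1 (fmap1 g) (fmap1 f);
  fmap2_id : forall {A B : ob C} (f : hom A B), fmap2 (id2 f) = id2 (fmap1 f);
  fmap2_vcomp : forall {A B : ob C} {f g h : hom A B} (b : cell g h) (a : cell f g),
      fmap2 (vcomp b a) = vcomp (fmap2 b) (fmap2 a);
  fmap2_hcomp : forall {A B C' : ob C} {f f' : hom A B} {g g' : hom B C'}
      (b : cell g g') (a : cell f f'),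
      fmap2 (hcomp b a) =
      Cast2 (eq_sym (fmap1_comp g f)) (eq_sym (fmap1_comp g' f')) (hcomp (fmap2 b) (fmap2 a))
}.

Arguments fobj {C D} _ _.
Arguments fmap1 {C D} _ {A B} _.
Arguments fmap2 {C D} _ {A B f g} _.
Coercion fobj : TwoFunctor >-> Funclass.

Record NatTrans {C D : TwoCat} (F G : TwoFunctor C D) := {
  ntc : forall A : ob C, hom (F A) (G A);
  nt_nat : forall {A B : ob C} (f : hom A B),
      comp1 (fmap1 G f) (ntc A) = comp1 (ntc B) (fmap1 F f);
  nt_2nat : forall {A B : ob C} {f g : hom A B} (t : cell f g),
      whiskerR (fmap2 G t) (ntc A) =
      Cast2 (eq_sym (nt_nat f)) (eq_sym (nt_nat g)) (whiskerL (ntc B) (fmap2 F t))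
}.
Arguments ntc {C D F G} _ _.
Arguments nt_nat {C D F G} _ {A B} _.
Coercion ntc : NatTrans >-> Funclass.

Record Modif {C D : TwoCat} {F G : TwoFunctor C D} (a b : NatTrans F G) := {
  mdc : forall A : ob C, cell (a A) (b A);
  md_law : forall (A B : ob C) (f : hom A B),
      whiskerL (fmap1 G f) (mdc A) =
      Cast2 (eq_sym (nt_nat a f)) (eq_sym (nt_nat b f)) (whiskerR (mdc B) (fmap1 F f))
}.
Arguments mdc {C D F G a b} _ _.
Coercion mdc : Modif >-> Funclass.

Definition pointwise {C D : TwoCat} (K : cls D) {F G : TwoFunctor C D} (a : NatTrans F G) : Prop :=
  forall A : ob C, K _ _ (a A).

(* Existence and uniqueness of Delta are settled componentwise by condition
   (iii) in D; the only thing left is that the chosen components form a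
   modification.  Whiskering the modification law for Delta by the 2-epimorphic
   component eps_A turns it into the modification law for Phi, transported
   along the naturality square of eps, so it holds. *)
From Stdlib Require Import Eqdep ProofIrrelevance FunctionalExtensionality
  ClassicalEpsilon.

Definition cell_heq {D : TwoCat} {A B : ob D} {f g f' g' : hom A B}
  (a : cell f g) (b : cell f' g') : Prop :=
  exists (ef : f = f') (eg : g = g'), Cast2 ef eg a = b.

Section CellHeq.
Variable D : TwoCat.

Lemma cell_heq_refl {A B : ob D} {f g : hom A B} (a : cell f g) : cell_heq a a.
Proof. exists eq_refl, eq_refl; reflexivity. Qed.

Lemma cell_heq_sym {A B : ob D} {f g f' g' : hom A B}
  (a : cell f g) (b : cell f' g') : cell_heq a b -> cell_heq b a.
Proof.
  intros [ef [eg H]]; destruct ef, eg; cbn in H; subst b; apply cell_heq_refl.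
Qed.

Lemma cell_heq_trans {A B : ob D} {f g f' g' f'' g'' : hom A B}
  (a : cell f g) (b : cell f' g') (c : cell f'' g'') :
  cell_heq a b -> cell_heq b c -> cell_heq a c.
Proof.
  intros [ef [eg H]] [ef' [eg' H']]; destruct ef, eg, ef', eg'; cbn in *; subst.
  apply cell_heq_refl.
Qed.

Lemma cell_heq_Cast2 {A B : ob D} {f g f' g' : hom A B} (ef : f = f') (eg : g = g')
  (a : cell f g) : cell_heq a (Cast2 ef eg a).
Proof. exists ef, eg; reflexivity. Qed.

Lemma cell_heq_eq {A B : ob D} {f g : hom A B} (a b : cell f g) :
  cell_heq a b -> a = b.
Proof.
  intros [ef [eg H]]. rewrite (UIP_refl _ _ ef), (UIP_refl _ _ eg) in H. exact H.
Qed.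

Lemma cell_heq_whiskerL {A B C : ob D} (h : hom B C) {f g f' g' : hom A B}
  (a : cell f g) (b : cell f' g') :
  cell_heq a b -> cell_heq (whiskerL h a) (whiskerL h b).
Proof.
  intros [ef [eg H]]; destruct ef, eg; cbn in H; subst; apply cell_heq_refl.
Qed.

Lemma cell_heq_whiskerR {A B C : ob D} (h h' : hom A B) {f g f' g' : hom B C}
  (a : cell f g) (b : cell f' g') :
  h = h' -> cell_heq a b -> cell_heq (whiskerR a h) (whiskerR b h').
Proof.
  intros -> [ef [eg H]]; destruct ef, eg; cbn in H; subst; apply cell_heq_refl.
Qed.

Lemma whiskerRL_heq {A B C E : ob D} (e : hom A B) {f f' : hom B C} (g : hom C E)
  (a : cell f f') : cell_heq (whiskerR (whiskerL g a) e) (whiskerL g (whiskerR a e)).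
Proof.
  apply cell_heq_sym.
  exists (comp1_assoc g f e), (comp1_assoc g f' e).
  exact (hcomp_assoc D (id2 g) a (id2 e)).
Qed.

Lemma whiskerRR_heq {A B C E : ob D} (e : hom A B) (f : hom B C) {g g' : hom C E}
  (a : cell g g') : cell_heq (whiskerR (whiskerR a f) e) (whiskerR a (comp1 f e)).
Proof.
  apply cell_heq_sym.
  exists (comp1_assoc g f e), (comp1_assoc g' f e).
  unfold whiskerR. rewrite <- (hcomp_id2 D).
  exact (hcomp_assoc D a (id2 f) (id2 e)).
Qed.

End CellHeq.

Section Modifications.
Variables C D : TwoCat.

Lemma modif_ext {F G : TwoFunctor C D} {a b : NatTrans F G} (X Y : Modif a b) :
  (forall A, mdc X A = mdc Y A) -> X = Y.
Proof.
  destruct X as [x hx], Y as [y hy]; cbn; intros H.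
  assert (x = y) by (apply functional_extensionality_dep; exact H).
  subst y. f_equal. apply proof_irrelevance.
Qed.

Variables (F F' G : TwoFunctor C D) (eps : NatTrans F F').
Hypothesis eps_epi : forall A, two_epi (eps A).

Lemma modif_law_of_whiskerR_epi (a1 a2 : NatTrans F G) (Phi : Modif a1 a2)
  (d1 d2 : NatTrans F' G) (Delta : forall A, cell (d1 A) (d2 A))
  (HDelta : forall A, cell_heq (whiskerR (Delta A) (eps A)) (Phi A))
  (A B : ob C) (f : hom A B) :
  whiskerL (fmap1 G f) (Delta A) =
  Cast2 (eq_sym (nt_nat d1 f)) (eq_sym (nt_nat d2 f))
    (whiskerR (Delta B) (fmap1 F' f)).
Proof.
  apply (eps_epi A), cell_heq_eq.
  assert (Hleft : cell_heq (whiskerR (whiskerL (fmap1 G f) (Delta A)) (eps A))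
                           (whiskerR (Phi B) (fmap1 F f))).
  { eapply cell_heq_trans; [apply whiskerRL_heq |].
    eapply cell_heq_trans; [apply cell_heq_whiskerL, HDelta |].
    rewrite (md_law Phi). apply cell_heq_sym, cell_heq_Cast2. }
  assert (Hright : cell_heq (whiskerR (Phi B) (fmap1 F f))
      (whiskerR (whiskerR (Delta B) (fmap1 F' f)) (eps A))).
  { eapply cell_heq_trans.
    { apply (cell_heq_whiskerR _ _ _ (Phi B) (whiskerR (Delta B) (eps B)) eq_refl).
      apply cell_heq_sym, HDelta. }
    eapply cell_heq_trans; [apply whiskerRR_heq |].
    eapply cell_heq_trans;
      [apply (cell_heq_whiskerR _ _ _ (Delta B) (Delta B) (eq_sym (nt_nat eps f))),
         cell_heq_refl |].
    apply cell_heq_sym, whiskerRR_heq. }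
  eapply cell_heq_trans; [exact Hleft |].
  eapply cell_heq_trans; [exact Hright |].
  apply cell_heq_whiskerR; [reflexivity | apply cell_heq_Cast2].
Qed.

End Modifications.

Theorem lemma3p3 (C D : TwoCat) (E M : cls D)
  (HEM : enhanced_factorization_system E M)
  (Hsep : separates_parallel_pairs E M)
  (HE : forall (A B : ob D) (f : hom A B), E A B f -> two_epi f)
  (HM : forall (A B : ob D) (f : hom A B), M A B f -> two_mono f)
  (F F' G G' : TwoFunctor C D)
  (eps : NatTrans F F') (mu : NatTrans G G')
  (Heps : pointwise E eps) (Hmu : pointwise M mu)
  (a1 a2 : NatTrans F G) (a1' a2' : NatTrans F' G')
  (h1 : forall A : ob C, comp1 (a1' A) (eps A) = comp1 (mu A) (a1 A))
  (h2 : forall A : ob C, comp1 (a2' A) (eps A) = comp1 (mu A) (a2 A))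
  (Phi : Modif a1 a2) (Phi' : Modif a1' a2')
  (HPhi : forall A : ob C,
      whiskerL (mu A) (Phi A) = Cast2 (h1 A) (h2 A) (whiskerR (Phi' A) (eps A)))
  (d1 d2 : NatTrans F' G)
  (e1 : forall A : ob C, comp1 (d1 A) (eps A) = a1 A)
  (e2 : forall A : ob C, comp1 (d2 A) (eps A) = a2 A)
  (m1 : forall A : ob C, comp1 (mu A) (d1 A) = a1' A)
  (m2 : forall A : ob C, comp1 (mu A) (d2 A) = a2' A) :
  exists! Delta : Modif d1 d2,
    forall A : ob C,
      whiskerR (Delta A) (eps A) = Cast2 (eq_sym (e1 A)) (eq_sym (e2 A)) (Phi A) /\
      whiskerL (mu A) (Delta A) = Cast2 (eq_sym (m1 A)) (eq_sym (m2 A)) (Phi' A).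
Proof.
  destruct HEM as [_ [_ [_ [_ Hiii]]]].
  pose (lift A := constructive_indefinite_description _
    (Hiii _ _ _ _ _ _ (Heps A) (Hmu A) _ _ _ _ (h1 A) (h2 A) _ _ (HPhi A)
       _ _ (e1 A) (e2 A) (m1 A) (m2 A))).
  pose (Delta A := proj1_sig (lift A)).
  assert (HDelta : forall A, cell_heq (whiskerR (Delta A) (eps A)) (Phi A)).
  { intro A. unfold Delta. rewrite (proj1 (proj1 (proj2_sig (lift A)))).
    apply cell_heq_sym, cell_heq_Cast2. }
  exists (Build_Modif d1 d2 Delta
    (@modif_law_of_whiskerR_epi C D F F' G eps (fun A => HE _ _ _ (Heps A))
       _ _ Phi _ _ Delta HDelta)).
  split.
  - intro A. exact (proj1 (proj2_sig (lift A))).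
  - intros Y HY. apply modif_ext. intro A. exact (proj2 (proj2_sig (lift A)) _ (HY A)).
Qed.
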